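(* Let $V\colon\mathbb{R}^3\to S^2$ define a line fibration of $\mathbb{R}^3$. If the differential $\mathrm{d}_{p_0}V$ has rank $2$ at some point $p_0\in\mathbb{R}^3$, then the line fibration contains no line $\ell\neq\ell_{p_0}$ that is parallel to $\ell_{p_0}$. In particular, if $\mathrm{d}_pV$ has rank $2$ at every point $p$ (the fibration is non-degenerate), then no two distinct lines of the fibration are parallel (the fibration is skew). *)

From Stdlib Require Import Reals Lra.
Open Scope R_scope.

Record vec3 : Type := mkv { vx : R; vy : R; vz : R }.

Definition vadd (u w : vec3) : vec3 := mkv (vx u + vx w) (vy u + vy w) (vz u + vz w).
Definition vsub (u w : vec3) : vec3 := mkv (vx u - vx w) (vy u - vy w) (vz u - vz w).
Definition vscale (a : R) (u : vec3) : vec3 := mkv (a * vx u) (a * vy u) (a * vz u).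
Definition vzero : vec3 := mkv 0 0 0.
Definition dot (u w : vec3) : R := vx u * vx w + vy u * vy w + vz u * vz w.
Definition vnorm (u : vec3) : R := sqrt (dot u u).
Definition cross (u w : vec3) : vec3 :=
  mkv (vy u * vz w - vz u * vy w) (vz u * vx w - vx u * vz w) (vx u * vy w - vy u * vx w).
Definition triple (u w z : vec3) : R := dot u (cross w z).

Definition sphere_valued (V : vec3 -> vec3) : Prop := forall p, vnorm (V p) = 1.

Definition on_line (V : vec3 -> vec3) (p x : vec3) : Prop :=
  exists t : R, x = vadd p (vscale t (V p)).

Definition same_line (V : vec3 -> vec3) (p q : vec3) : Prop :=
  forall x, on_line V p x <-> on_line V q x.

(* the lines l_p partition R^3 (every point p lies on l_p, so covering is automatic):
   two lines of the family are either equal or disjoint *)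
Definition lines_partition (V : vec3 -> vec3) : Prop :=
  forall p q, (exists x, on_line V p x /\ on_line V q x) -> same_line V p q.

Definition is_linear (L : vec3 -> vec3) : Prop :=
  forall a b u w, L (vadd (vscale a u) (vscale b w)) = vadd (vscale a (L u)) (vscale b (L w)).

Definition has_differential (V : vec3 -> vec3) (p : vec3) (L : vec3 -> vec3) : Prop :=
  is_linear L /\
  forall eps, 0 < eps -> exists delta, 0 < delta /\
    forall h, vnorm h < delta ->
      vnorm (vsub (vsub (V (vadd p h)) (V p)) (L h)) <= eps * vnorm h.

Definition is_C1 (V : vec3 -> vec3) (DV : vec3 -> vec3 -> vec3) : Prop :=
  (forall p, has_differential V p (DV p)) /\
  (forall h p eps, 0 < eps -> exists delta, 0 < delta /\
     forall q, vnorm (vsub q p) < delta -> vnorm (vsub (DV q h) (DV p h)) < eps).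

Definition line_fibration (V : vec3 -> vec3) (DV : vec3 -> vec3 -> vec3) : Prop :=
  sphere_valued V /\ is_C1 V DV /\ lines_partition V.

(* rank of a linear map L : R^3 -> R^3 equals 2: its image contains two linearly
   independent vectors, and no three linearly independent ones *)
Definition rank2 (L : vec3 -> vec3) : Prop :=
  (exists u w, cross (L u) (L w) <> vzero) /\
  (forall u w z, triple (L u) (L w) (L z) = 0).

Definition parallel_dirs (V : vec3 -> vec3) (p q : vec3) : Prop :=
  cross (V p) (V q) = vzero.

From Stdlib Require Import Reals Lra Psatz.
Open Scope R_scope.

(* Let [e = V p0] and let [l_q] be a line of the fibration parallel to, but different
   from, [l_p0]; write [q - p0 = b + s e] with [b] orthogonal to [e], [b <> 0].  Since
   [|V| = 1], [d_p0 V] maps into the plane orthogonal to [e], and having rank 2 it maps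
   onto it: pick [k1], [k2] with [d_p0 V k1 = e x b] and [d_p0 V k2 = b].  For
   [y = p0 + rho k2 + mu k1], with [rho] small and [mu] in [[-rho, rho]], the direction
   [V y] is [e + rho b + mu (e x b)] up to a small error, so the triple product
   [[V y, e, q - y]] is close to [mu |b|^2] and changes sign.  By the intermediate value
   theorem some line [l_y] is coplanar with [l_q] and, not being parallel to it, meets it;
   as the lines partition space, [l_y = l_q].  But every point of [l_q] is at distance at
   least [|b|] from [p0], while [y] is within [|b|/8]. *)

(** * Vector algebra *)

Lemma vec3_ext u w : vx u = vx w -> vy u = vy w -> vz u = vz w -> u = w.
Proof. destruct u, w; simpl; intros -> -> ->; reflexivity. Qed.

Ltac vec3_ring :=
  repeat match goal with v : vec3 |- _ => destruct v end;
  unfold triple, cross, dot, vzero, vscale, vsub, vadd; simpl;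
  try (apply vec3_ext; simpl); ring.

Lemma dot_self_ge0 u : 0 <= dot u u.
Proof. destruct u; unfold dot; simpl; nra. Qed.

Lemma dot_self_eq0 u : dot u u = 0 -> u = vzero.
Proof. destruct u; unfold dot; simpl; intros; apply vec3_ext; simpl; nra. Qed.

Lemma vnorm_ge0 u : 0 <= vnorm u.
Proof. apply sqrt_pos. Qed.

Lemma vnorm_sqr u : vnorm u * vnorm u = dot u u.
Proof. apply sqrt_sqrt, dot_self_ge0. Qed.

Lemma vnorm_unit e : dot e e = 1 -> vnorm e = 1.
Proof. intros He; unfold vnorm; rewrite He; apply sqrt_1. Qed.

Lemma vnorm_eq0 u : vnorm u = 0 -> u = vzero.
Proof. intros H; apply dot_self_eq0; rewrite <- vnorm_sqr, H; ring. Qed.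

Lemma Rle_of_sqr_le a b : 0 <= b -> a * a <= b * b -> a <= b.
Proof. nra. Qed.

Lemma Rabs_sqr a : Rabs a * Rabs a = a * a.
Proof. rewrite <- Rabs_mult; apply Rabs_pos_eq; nra. Qed.

Lemma dot_cross_self u w : dot (cross u w) (cross u w) = dot u u * dot w w - dot u w * dot u w.
Proof. vec3_ring. Qed.

Lemma dot_Cauchy_Schwarz u w : Rabs (dot u w) <= vnorm u * vnorm w.
Proof.
  apply Rle_of_sqr_le; [apply Rmult_le_pos; apply vnorm_ge0|].
  rewrite Rabs_sqr.
  replace (vnorm u * vnorm w * (vnorm u * vnorm w))
    with (vnorm u * vnorm u * (vnorm w * vnorm w)) by ring.
  rewrite !vnorm_sqr. pose proof (dot_self_ge0 (cross u w)). rewrite dot_cross_self in *. lra.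
Qed.

Lemma vnorm_cross_le u w : vnorm (cross u w) <= vnorm u * vnorm w.
Proof.
  apply Rle_of_sqr_le; [apply Rmult_le_pos; apply vnorm_ge0|].
  replace (vnorm u * vnorm w * (vnorm u * vnorm w))
    with (vnorm u * vnorm u * (vnorm w * vnorm w)) by ring.
  rewrite !vnorm_sqr, dot_cross_self. nra.
Qed.

Lemma triple_le u w z : Rabs (triple u w z) <= vnorm u * vnorm w * vnorm z.
Proof.
  eapply Rle_trans; [apply dot_Cauchy_Schwarz|].
  rewrite Rmult_assoc. apply Rmult_le_compat_l; [apply vnorm_ge0 | apply vnorm_cross_le].
Qed.

Lemma vnorm_scale a u : vnorm (vscale a u) = Rabs a * vnorm u.
Proof.
  apply Rsqr_inj; [apply vnorm_ge0 | apply Rmult_le_pos; [apply Rabs_pos | apply vnorm_ge0]|].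
  unfold Rsqr. replace (Rabs a * vnorm u * (Rabs a * vnorm u))
    with (Rabs a * Rabs a * (vnorm u * vnorm u)) by ring.
  rewrite Rabs_sqr, !vnorm_sqr. vec3_ring.
Qed.

Lemma vnorm_triangle u w : vnorm (vadd u w) <= vnorm u + vnorm w.
Proof.
  pose proof (vnorm_ge0 u); pose proof (vnorm_ge0 w).
  apply Rle_of_sqr_le; [lra|].
  assert (E : dot (vadd u w) (vadd u w) = dot u u + 2 * dot u w + dot w w) by vec3_ring.
  rewrite vnorm_sqr, E, <- (vnorm_sqr u), <- (vnorm_sqr w).
  pose proof (dot_Cauchy_Schwarz u w). pose proof (Rle_abs (dot u w)). nra.
Qed.

Lemma vnorm_sub_le u w : vnorm (vsub u w) <= vnorm u + vnorm w.
Proof.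
  replace (vsub u w) with (vadd u (vscale (-1) w)) by vec3_ring.
  rewrite <- (Rmult_1_l (vnorm w)), <- Rabs_R1, <- Rabs_Ropp, <- vnorm_scale.
  apply vnorm_triangle.
Qed.

Lemma vnorm_orth_le b e s : dot b e = 0 -> vnorm b <= vnorm (vadd b (vscale s e)).
Proof.
  intros Hbe. apply Rle_of_sqr_le; [apply vnorm_ge0|].
  assert (E : dot (vadd b (vscale s e)) (vadd b (vscale s e))
              = dot b b + 2 * s * dot b e + s * s * dot e e) by vec3_ring.
  rewrite !vnorm_sqr, E, Hbe. pose proof (dot_self_ge0 e). nra.
Qed.

Lemma vadd_vsub_cancel p y : vadd p (vsub y p) = y.
Proof. vec3_ring. Qed.

Lemma dot_cross_l u w : dot (cross u w) u = 0.
Proof. vec3_ring. Qed.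

Lemma orth_decomposition d e : dot e e = 1 ->
  exists b s, dot b e = 0 /\ d = vadd b (vscale s e).
Proof.
  intros He. exists (vsub d (vscale (dot d e) e)), (dot d e). split; [|vec3_ring].
  transitivity (dot d e * (1 - dot e e)); [vec3_ring|]. rewrite He; ring.
Qed.

Lemma Rabs_coord_le k :
  Rabs (vx k) <= vnorm k /\ Rabs (vy k) <= vnorm k /\ Rabs (vz k) <= vnorm k.
Proof.
  pose proof (vnorm_ge0 k). pose proof (vnorm_sqr k).
  destruct k as [a b c]; unfold dot in *; simpl in *.
  repeat split; apply Rle_of_sqr_le; auto; rewrite Rabs_sqr; nra.
Qed.

Lemma span2_of_triple_eq0 u w y : cross u w <> vzero -> triple u w y = 0 ->
  exists s t, y = vadd (vscale s u) (vscale t w).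
Proof.
  intros Huw Hy.
  assert (Cramer : forall c, vscale (triple u w c) y =
    vadd (vscale (triple y w c) u) (vadd (vscale (triple u y c) w) (vscale (triple u w y) c)))
    by (intros; vec3_ring).
  specialize (Cramer (cross u w)). rewrite Hy in Cramer.
  set (D := triple u w (cross u w)) in Cramer.
  assert (HD : D <> 0).
  { assert (ED : D = dot (cross u w) (cross u w)) by (unfold D; vec3_ring).
    rewrite ED; intros E; apply Huw, dot_self_eq0, E. }
  exists (triple y w (cross u w) / D), (triple u y (cross u w) / D).
  revert Cramer; unfold vadd, vscale; intros E; injection E; intros Ez Ey Ex.
  apply vec3_ext; simpl; apply (Rmult_eq_reg_l D); auto;
    [rewrite Ex | rewrite Ey | rewrite Ez]; field; exact HD.
Qed.

Lemma triple_eq0_of_orth e u w z : e <> vzero ->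
  dot u e = 0 -> dot w e = 0 -> dot z e = 0 -> triple u w z = 0.
Proof.
  intros He Hu Hw Hz.
  assert (E : triple u w z * dot e e =
    dot u e * triple e w z + dot w e * triple u e z + dot z e * triple u w e) by vec3_ring.
  rewrite Hu, Hw, Hz in E.
  assert (dot e e <> 0) by (intros E'; apply He, dot_self_eq0, E').
  apply (Rmult_eq_reg_r (dot e e)); [lra | assumption].
Qed.

Lemma parallel_unit u e : cross u e = vzero -> dot e e = 1 -> u = vscale (dot e u) e.
Proof.
  intros Hue He.
  assert (E : vscale (dot e e) u = vadd (vscale (dot e u) e) (cross e (cross u e))) by vec3_ring.
  rewrite Hue, He in E.
  transitivity (vscale 1 u); [vec3_ring|]. rewrite E. vec3_ring.
Qed.

Lemma linear_scale L s u : is_linear L -> L (vscale s u) = vscale s (L u).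
Proof.
  intros HL. specialize (HL s 0 u u).
  replace (vadd (vscale s u) (vscale 0 u)) with (vscale s u) in HL by vec3_ring.
  rewrite HL. vec3_ring.
Qed.

Lemma rank2_onto_orth L e : is_linear L -> e <> vzero -> (forall k, dot (L k) e = 0) ->
  (exists u w, cross (L u) (L w) <> vzero) -> forall y, dot y e = 0 -> exists k, L k = y.
Proof.
  intros HL He Horth [u [w Huw]] y Hy.
  destruct (span2_of_triple_eq0 (L u) (L w) y Huw) as [s [t ->]].
  { apply (triple_eq0_of_orth e); auto. }
  exists (vadd (vscale s u) (vscale t w)). apply HL.
Qed.

Lemma on_line_self V p : on_line V p p.
Proof. exists 0. vec3_ring. Qed.

Lemma lines_meet_of_coplanar y q u w : cross u w <> vzero -> triple u w (vsub q y) = 0 ->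
  exists s t, vadd y (vscale s u) = vadd q (vscale t w).
Proof.
  intros Huw Hq. destruct (span2_of_triple_eq0 u w _ Huw Hq) as [s [t Hst]].
  exists s, (- t).
  replace (vadd q (vscale (- t) w)) with (vadd y (vsub (vsub q y) (vscale t w))) by vec3_ring.
  rewrite Hst. vec3_ring.
Qed.

(** * Differentials and continuity *)

Lemma sphere_valued_unit V p : sphere_valued V -> dot (V p) (V p) = 1.
Proof. intros HS; rewrite <- vnorm_sqr, (HS p); ring. Qed.

Lemma dot_unit_sub_le0 e x : dot e e = 1 -> dot x x = 1 -> dot e (vsub x e) <= 0.
Proof.
  intros He Hx.
  assert (E : 2 * dot e (vsub x e) = dot x x - dot e e - dot (vsub x e) (vsub x e)) by vec3_ring.
  pose proof (dot_self_ge0 (vsub x e)). lra.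
Qed.

Lemma sphere_differential_orth_le0 V p L k : sphere_valued V -> has_differential V p L ->
  dot (L k) (V p) <= 0.
Proof.
  intros HS [HL Hdf]. set (e := V p). set (N := vnorm k).
  assert (HN : 0 <= N) by apply vnorm_ge0.
  (* [|V| = 1] gives [e . (V (p + s k) - e) <= 0], whose first-order part is [s (L k . e)]. *)
  apply Rle_plus_epsilon. intros eps Heps. rewrite Rplus_0_l.
  destruct (Hdf (eps / (N + 1))) as [delta [Hdelta Hh]]; [apply Rdiv_lt_0_compat; lra|].
  set (s := delta / (N + 1)).
  assert (Hs : 0 < s) by (apply Rdiv_lt_0_compat; lra).
  assert (HsN : s * N < delta).
  { unfold s. apply (Rmult_lt_reg_r (N + 1)); [lra|].
    replace (delta / (N + 1) * N * (N + 1)) with (delta * N) by (field; lra). nra. }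
  specialize (Hh (vscale s k)).
  rewrite vnorm_scale, Rabs_pos_eq, (linear_scale L s k HL) in Hh by lra. fold N in Hh.
  set (r := vsub (vsub (V (vadd p (vscale s k))) e) (vscale s (L k))) in Hh.
  assert (Hr : Rabs (dot e r) <= eps / (N + 1) * (s * N)).
  { eapply Rle_trans; [apply dot_Cauchy_Schwarz|].
    rewrite (vnorm_unit e), Rmult_1_l by (apply sphere_valued_unit; exact HS). auto. }
  assert (Htangent : dot e (vsub (V (vadd p (vscale s k))) e) <= 0).
  { apply dot_unit_sub_le0; apply sphere_valued_unit; exact HS. }
  assert (E : dot e (vsub (V (vadd p (vscale s k))) e) = s * dot (L k) e + dot e r)
    by (unfold r; vec3_ring).
  assert (HNe : eps / (N + 1) * N <= eps).
  { replace (eps / (N + 1) * N) with (eps - eps / (N + 1)) by (field; lra).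
    assert (0 < eps / (N + 1)) by (apply Rdiv_lt_0_compat; lra). lra. }
  pose proof (Rle_abs (- dot e r)). rewrite Rabs_Ropp in *.
  apply (Rmult_le_reg_l s); [lra|]. nra.
Qed.

Lemma sphere_differential_orth V p L k : sphere_valued V -> has_differential V p L ->
  dot (L k) (V p) = 0.
Proof.
  intros HS HD. apply Rle_antisym; [exact (sphere_differential_orth_le0 V p L k HS HD)|].
  pose proof (sphere_differential_orth_le0 V p L (vscale (-1) k) HS HD) as Hopp.
  rewrite (linear_scale L _ _ (proj1 HD)) in Hopp.
  replace (dot (vscale (-1) (L k)) (V p)) with (- dot (L k) (V p)) in Hopp by vec3_ring.
  lra.
Qed.

Lemma differential_along_line V x L d : has_differential V x L ->
  exists delta, 0 < delta /\ forall s, Rabs s < delta ->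
    vnorm (vsub (V (vadd x (vscale s d))) (V x)) <= Rabs s * (vnorm (L d) + vnorm d).
Proof.
  intros [HL Hdf]. destruct (Hdf 1 Rlt_0_1) as [delta [Hdelta Hh]].
  pose proof (vnorm_ge0 d).
  exists (delta / (vnorm d + 1)). split; [apply Rdiv_lt_0_compat; lra|].
  intros s Hs. pose proof (Rabs_pos s).
  assert (Hsd : vnorm (vscale s d) < delta).
  { rewrite vnorm_scale. apply (Rmult_lt_compat_r (vnorm d + 1)) in Hs; [|lra].
    replace (delta / (vnorm d + 1) * (vnorm d + 1)) with delta in Hs by (field; lra). nra. }
  specialize (Hh _ Hsd). rewrite Rmult_1_l in Hh.
  set (y := V (vadd x (vscale s d))) in *.
  replace (vsub y (V x)) with (vadd (L (vscale s d)) (vsub (vsub y (V x)) (L (vscale s d))))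
    by vec3_ring.
  eapply Rle_trans; [apply vnorm_triangle|].
  rewrite (linear_scale L s d HL), !vnorm_scale in *. lra.
Qed.

Definition vcontinuity (f : R -> vec3) : Prop :=
  continuity (fun s => vx (f s)) /\ continuity (fun s => vy (f s)) /\
  continuity (fun s => vz (f s)).

Lemma vcontinuity_of_vnorm f :
  (forall s0 eps, 0 < eps -> exists delta, 0 < delta /\
     forall s, Rabs (s - s0) < delta -> vnorm (vsub (f s) (f s0)) < eps) ->
  vcontinuity f.
Proof.
  intros Hf.
  enough (Hcoord : forall c : vec3 -> R, (forall u, Rabs (c u) <= vnorm u) ->
            (forall u w, c (vsub u w) = c u - c w) -> continuity (fun s => c (f s))).
  { split; [|split]; apply Hcoord; try (intros; apply Rabs_coord_le); reflexivity. }
  intros c Hc Hlin s0 eps Heps.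
  destruct (Hf s0 eps Heps) as [delta [Hdelta Hs]].
  exists delta; split; auto. intros s [_ Hds]. simpl in *. unfold Rdist in *.
  rewrite <- Hlin. eapply Rle_lt_trans; [apply Hc | apply Hs, Hds].
Qed.

Lemma vcontinuity_along_line V DV a d : (forall p, has_differential V p (DV p)) ->
  vcontinuity (fun s => V (vadd a (vscale s d))).
Proof.
  intros HD. apply vcontinuity_of_vnorm. intros s0 eps Heps.
  set (x := vadd a (vscale s0 d)).
  destruct (differential_along_line V x (DV x) d (HD x)) as [delta [Hdelta Hx]].
  set (C := vnorm (DV x d) + vnorm d + 1).
  assert (HC : 1 <= C).
  { pose proof (vnorm_ge0 (DV x d)); pose proof (vnorm_ge0 d). unfold C; lra. }
  exists (Rmin delta (eps / C)). split; [apply Rmin_pos; [|apply Rdiv_lt_0_compat]; lra|].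
  intros s Hs.
  replace (vadd a (vscale s d)) with (vadd x (vscale (s - s0) d)) by (unfold x; vec3_ring).
  eapply Rle_lt_trans; [apply Hx; eapply Rlt_le_trans; [exact Hs | apply Rmin_l]|].
  assert (Heps' : Rabs (s - s0) * C < eps).
  { apply (Rlt_le_trans _ (eps / C * C)).
    - apply Rmult_lt_compat_r; [lra|]. eapply Rlt_le_trans; [exact Hs | apply Rmin_r].
    - right; field; lra. }
  unfold C in Heps'. pose proof (Rabs_pos (s - s0)). nra.
Qed.

Ltac continuity_poly :=
  repeat first [ apply continuity_plus | apply continuity_minus | apply continuity_mult
               | apply continuity_opp | assumption
               | apply continuity_const; intros ? ?; reflexivity ].

Lemma continuity_triple f g h : vcontinuity f -> vcontinuity g -> vcontinuity h ->
  continuity (fun s => triple (f s) (g s) (h s)).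
Proof. intros (?&?&?) (?&?&?) (?&?&?); unfold triple, dot, cross; continuity_poly. Qed.

Lemma vcontinuity_sub f g : vcontinuity f -> vcontinuity g ->
  vcontinuity (fun s => vsub (f s) (g s)).
Proof. intros (?&?&?) (?&?&?); unfold vsub; repeat split; simpl; continuity_poly. Qed.

Lemma vcontinuity_affine a d : vcontinuity (fun s => vadd a (vscale s d)).
Proof. unfold vadd, vscale; repeat split; simpl; reg. Qed.

Lemma vcontinuity_const a : vcontinuity (fun _ => a).
Proof. repeat split; reg. Qed.

Lemma zero_of_near_linear F rho c : continuity F -> 0 < rho -> 0 < c ->
  (forall mu, Rabs mu <= rho -> Rabs (F mu - mu * c) < rho * c) ->
  exists mu, Rabs mu <= rho /\ F mu = 0.
Proof.
  intros Hcont Hrho Hc Hnear.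
  assert (Hneg : F (- rho) < 0).
  { specialize (Hnear (- rho)). rewrite Rabs_Ropp, Rabs_pos_eq in Hnear by lra.
    pose proof (Rle_abs (F (- rho) - - rho * c)). nra. }
  assert (Hpos : 0 < F rho).
  { specialize (Hnear rho). rewrite (Rabs_pos_eq rho) in Hnear by lra.
    pose proof (Rle_abs (- (F rho - rho * c))). rewrite Rabs_Ropp in *. nra. }
  destruct (IVT F (- rho) rho Hcont ltac:(lra) Hneg Hpos) as [mu [Hmu HF0]].
  exists mu. split; [apply Rabs_le; lra | exact HF0].
Qed.

(** * Lines through points near [p0] *)

Definition orth_combination (e b : vec3) (rho mu : R) : vec3 :=
  vadd (vscale rho b) (vscale mu (cross e b)).

Lemma orth_combination_orth e b rho mu : dot b e = 0 ->
  dot (orth_combination e b rho mu) e = 0.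
Proof.
  intros Hbe. transitivity (rho * dot b e); [unfold orth_combination; vec3_ring|].
  rewrite Hbe; ring.
Qed.

Lemma orth_combination_sqr e b rho mu : dot e e = 1 -> dot b e = 0 ->
  dot (orth_combination e b rho mu) (orth_combination e b rho mu)
  = (rho * rho + mu * mu) * dot b b.
Proof.
  intros He Hbe.
  transitivity (rho * rho * dot b b + mu * mu * (dot e e * dot b b - dot b e * dot b e));
    [unfold orth_combination; vec3_ring|].
  rewrite He, Hbe; ring.
Qed.

Lemma orth_combination_triple e b rho mu : dot e e = 1 -> dot b e = 0 ->
  triple (orth_combination e b rho mu) e b = mu * dot b b.
Proof.
  intros He Hbe.
  transitivity (mu * (dot e e * dot b b - dot b e * dot b e));
    [unfold orth_combination; vec3_ring|].
  rewrite He, Hbe; ring.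
Qed.

Lemma meeting_function_estimate e b rho mu h x : dot e e = 1 -> dot b e = 0 ->
  Rabs mu <= rho -> vnorm h <= vnorm b / 8 ->
  vnorm (vsub (vsub x e) (orth_combination e b rho mu)) <= rho * vnorm b / 4 ->
  Rabs (triple x e (vsub b h) - mu * dot b b) <= 17/32 * rho * dot b b.
Proof.
  intros He Hbe Hmu Hh Hr.
  assert (Hsplit : forall w, triple x e (vsub b h)
            = triple w e b - triple w e h + triple (vsub (vsub x e) w) e (vsub b h))
    by (intros; vec3_ring).
  rewrite (Hsplit (orth_combination e b rho mu)), orth_combination_triple by assumption.
  set (w := orth_combination e b rho mu) in *. set (r := vsub (vsub x e) w) in *.
  pose proof (Rabs_pos mu); pose proof (vnorm_ge0 b); pose proof (vnorm_sub_le b h).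
  set (B := vnorm b) in *.
  assert (HB : dot b b = B * B) by (unfold B; rewrite vnorm_sqr; reflexivity).
  assert (Hw : vnorm w <= 2 * rho * B).
  { apply Rle_of_sqr_le; [nra|].
    rewrite vnorm_sqr; unfold w; rewrite orth_combination_sqr, HB, <- (Rabs_sqr mu) by assumption.
    assert (Rabs mu * Rabs mu <= rho * rho) by (apply Rmult_le_compat; lra).
    assert (0 <= B * B) by nra. nra. }
  assert (Hbh : vnorm (vsub b h) <= B + B / 8) by lra.
  pose proof (triple_le w e h) as T1. pose proof (triple_le r e (vsub b h)) as T2.
  rewrite (vnorm_unit e He), Rmult_1_r in T1, T2.
  pose proof (vnorm_ge0 w); pose proof (vnorm_ge0 h); pose proof (vnorm_ge0 r).
  pose proof (vnorm_ge0 (vsub b h)).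
  rewrite HB.
  replace (mu * (B * B) - triple w e h + triple r e (vsub b h) - mu * (B * B))
    with (- triple w e h + triple r e (vsub b h)) by ring.
  eapply Rle_trans; [apply Rabs_triang|]. rewrite Rabs_Ropp.
  assert (vnorm w * vnorm h <= 2 * rho * B * (B / 8)) by (apply Rmult_le_compat; lra).
  assert (vnorm r * vnorm (vsub b h) <= rho * B / 4 * (B + B / 8))
    by (apply Rmult_le_compat; lra).
  lra.
Qed.

Lemma direction_not_parallel e b rho mu x : dot e e = 1 -> dot b e = 0 ->
  0 < rho -> 0 < vnorm b ->
  vnorm (vsub (vsub x e) (orth_combination e b rho mu)) <= rho * vnorm b / 4 ->
  cross x e <> vzero.
Proof.
  intros He Hbe Hrho HB Hr Hxe.
  assert (Hsplit : forall w, dot x w = dot w e + dot w w + dot (vsub (vsub x e) w) w)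
    by (intros; vec3_ring).
  assert (Hpar : forall w, dot x w = dot e x * dot w e).
  { intros w. rewrite (parallel_unit x e Hxe He) at 1. vec3_ring. }
  set (w := orth_combination e b rho mu) in *.
  assert (Hw : rho * vnorm b <= vnorm w).
  { apply Rle_of_sqr_le; [apply vnorm_ge0|].
    rewrite (vnorm_sqr w); unfold w; rewrite orth_combination_sqr, <- vnorm_sqr by assumption.
    pose proof (Rle_0_sqr mu); pose proof (vnorm_ge0 b); unfold Rsqr in *; nra. }
  specialize (Hsplit w). rewrite Hpar in Hsplit. unfold w in Hsplit.
  rewrite orth_combination_orth, Rmult_0_r, Rplus_0_l in Hsplit by assumption. fold w in Hsplit.
  rewrite <- vnorm_sqr in Hsplit.
  set (r := vsub (vsub x e) w) in *.
  pose proof (dot_Cauchy_Schwarz r w). pose proof (Rle_abs (- dot r w)).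
  rewrite Rabs_Ropp in *. pose proof (vnorm_ge0 r).
  assert (vnorm r * vnorm w <= rho * vnorm b / 4 * vnorm w)
    by (apply Rmult_le_compat_r; [apply vnorm_ge0 | lra]).
  assert (0 < rho * vnorm b) by (apply Rmult_lt_0_compat; lra).
  assert (rho * vnorm b * vnorm w <= vnorm w * vnorm w)
    by (apply Rmult_le_compat_r; [apply vnorm_ge0 | exact Hw]).
  nra.
Qed.

Lemma small_displacement V p L k1 k2 B : has_differential V p L -> 0 < B ->
  exists rho, 0 < rho /\ forall mu, Rabs mu <= rho ->
    let y := vadd (vadd p (vscale rho k2)) (vscale mu k1) in
    vnorm (vsub y p) <= B / 8 /\
    vnorm (vsub (vsub (V y) (V p)) (L (vsub y p))) <= rho * B / 4.
Proof.
  intros [_ Hdf] HB.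
  pose proof (vnorm_ge0 k1); pose proof (vnorm_ge0 k2).
  set (K := vnorm k1 + vnorm k2 + 1).
  assert (HK : 1 <= K) by (unfold K; lra).
  destruct (Hdf (B / (4 * K))) as [d [Hd Hh]]; [apply Rdiv_lt_0_compat; lra|].
  exists (Rmin (d / (2 * K)) (B / (8 * K))).
  set (rho := Rmin (d / (2 * K)) (B / (8 * K))).
  assert (Hrho : 0 < rho) by (apply Rmin_pos; apply Rdiv_lt_0_compat; lra).
  assert (HrK_d : rho * K < d).
  { apply (Rle_lt_trans _ (d / (2 * K) * K)); [apply Rmult_le_compat_r; [lra | apply Rmin_l]|].
    replace (d / (2 * K) * K) with (d / 2) by (field; lra). lra. }
  assert (HrK_B : rho * K <= B / 8).
  { apply (Rle_trans _ (B / (8 * K) * K)); [apply Rmult_le_compat_r; [lra | apply Rmin_r]|].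
    right; field; lra. }
  split; [exact Hrho|]. intros mu Hmu y.
  assert (Hny : vnorm (vsub y p) <= rho * K).
  { replace (vsub y p) with (vadd (vscale rho k2) (vscale mu k1)) by (unfold y; vec3_ring).
    eapply Rle_trans; [apply vnorm_triangle|].
    rewrite !vnorm_scale, (Rabs_pos_eq rho) by lra. unfold K. nra. }
  split; [lra|].
  specialize (Hh (vsub y p) ltac:(lra)). rewrite vadd_vsub_cancel in Hh.
  eapply Rle_trans; [exact Hh|].
  apply (Rle_trans _ (B / (4 * K) * (rho * K))).
  - apply Rmult_le_compat_l; [left; apply Rdiv_lt_0_compat|]; lra.
  - right; field; lra.
Qed.

Lemma triple_sub_shift x e p q b s y : vsub q p = vadd b (vscale s e) ->
  triple x e (vsub q y) = triple x e (vsub b (vsub y p)).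
Proof. intros Hq. rewrite <- (vadd_vsub_cancel p q), Hq. vec3_ring. Qed.

Lemma nearby_line_meets V DV p0 q b sg c :
  (forall p, has_differential V p (DV p)) -> dot (V p0) (V p0) = 1 ->
  (forall y, dot y (V p0) = 0 -> exists k, DV p0 k = y) ->
  V q = vscale c (V p0) -> c <> 0 ->
  dot b (V p0) = 0 -> 0 < vnorm b -> vsub q p0 = vadd b (vscale sg (V p0)) ->
  exists y, vnorm (vsub y p0) <= vnorm b / 8 /\ exists x, on_line V y x /\ on_line V q x.
Proof.
  intros HD He Honto HVq Hc Hbe HB Hq.
  destruct (Honto (cross (V p0) b) (dot_cross_l _ _)) as [k1 Hk1].
  destruct (Honto b Hbe) as [k2 Hk2].
  destruct (small_displacement V p0 (DV p0) k1 k2 (vnorm b) (HD p0) HB)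
    as [rho [Hrho Hsmall]].
  set (y := fun mu => vadd (vadd p0 (vscale rho k2)) (vscale mu k1)).
  assert (HDy : forall mu, DV p0 (vsub (y mu) p0) = orth_combination (V p0) b rho mu).
  { intros mu. replace (vsub (y mu) p0) with (vadd (vscale rho k2) (vscale mu k1))
      by (unfold y; vec3_ring).
    rewrite (proj1 (HD p0)), Hk1, Hk2. reflexivity. }
  (* [F mu = 0] iff the line through [y mu] is coplanar with [l_q]. *)
  set (F := fun mu => triple (V (y mu)) (V p0) (vsub q (y mu))).
  assert (Hbb : 0 < dot b b) by (rewrite <- vnorm_sqr; nra).
  assert (Hest : forall mu, Rabs mu <= rho ->
    Rabs (F mu - mu * dot b b) < rho * dot b b /\ cross (V (y mu)) (V p0) <> vzero).
  { intros mu Hmu. destruct (Hsmall mu Hmu) as [Hh Hr]. fold (y mu) in Hh, Hr.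
    rewrite HDy in Hr. split.
    - unfold F. rewrite (triple_sub_shift _ _ _ _ _ _ _ Hq).
      eapply Rle_lt_trans; [apply meeting_function_estimate; eassumption|]. nra.
    - apply (direction_not_parallel _ b rho mu); assumption. }
  assert (Hcont : continuity F).
  { apply continuity_triple.
    - apply (vcontinuity_along_line V DV _ _ HD).
    - apply vcontinuity_const.
    - apply vcontinuity_sub; [apply vcontinuity_const | apply vcontinuity_affine]. }
  destruct (zero_of_near_linear F rho (dot b b) Hcont Hrho Hbb (fun mu H => proj1 (Hest mu H)))
    as [mu [Hmu HF0]].
  exists (y mu). split; [exact (proj1 (Hsmall mu Hmu))|].
  destruct (lines_meet_of_coplanar (y mu) q (V (y mu)) (V p0) (proj2 (Hest mu Hmu)) HF0)
    as [s [t Hst]].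
  exists (vadd q (vscale t (V p0))). split.
  - exists s. symmetry; exact Hst.
  - exists (t / c). rewrite HVq. unfold vadd, vscale; apply vec3_ext; simpl; field; exact Hc.
Qed.

Lemma distinct_line_not_parallel V DV p0 q : line_fibration V DV -> rank2 (DV p0) ->
  ~ same_line V q p0 -> ~ parallel_dirs V q p0.
Proof.
  intros [HS [[HD _] Hpart]] [Hrank _] Hdistinct Hpar.
  pose proof (sphere_valued_unit V p0 HS) as He.
  assert (HVq : V q = vscale (dot (V p0) (V q)) (V p0)) by (apply parallel_unit; assumption).
  assert (Hc : dot (V p0) (V q) <> 0).
  { intros Hc0. pose proof (sphere_valued_unit V q HS) as Hq1. rewrite HVq, Hc0 in Hq1.
    revert Hq1; unfold dot, vscale; simpl; lra. }
  destruct (orth_decomposition (vsub q p0) (V p0) He) as [b [sg [Hbe Hq]]].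
  assert (Hfar : forall x, on_line V q x -> vnorm b <= vnorm (vsub x p0)).
  { intros x [t ->].
    replace (vsub (vadd q (vscale t (V q))) p0) with (vadd (vsub q p0) (vscale t (V q)))
      by vec3_ring.
    rewrite Hq, HVq.
    replace (vadd (vadd b (vscale sg (V p0))) (vscale t (vscale (dot (V p0) (V q)) (V p0))))
      with (vadd b (vscale (sg + t * dot (V p0) (V q)) (V p0))) by vec3_ring.
    apply vnorm_orth_le, Hbe. }
  assert (HB : 0 < vnorm b).
  { destruct (vnorm_ge0 b) as [|Hb0]; [assumption|].
    exfalso. apply Hdistinct, Hpart. exists q. split; [apply on_line_self|].
    exists sg. rewrite <- (vadd_vsub_cancel p0 q), Hq, (vnorm_eq0 b (eq_sym Hb0)). vec3_ring. }
  assert (Honto : forall y, dot y (V p0) = 0 -> exists k, DV p0 k = y).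
  { apply rank2_onto_orth; [exact (proj1 (HD p0)) | | | exact Hrank].
    - intros E. rewrite E in He. revert He; unfold dot, vzero; simpl; lra.
    - intros k. apply sphere_differential_orth; [exact HS | exact (HD p0)]. }
  destruct (nearby_line_meets V DV p0 q b sg _ HD He Honto HVq Hc Hbe HB Hq)
    as [y [Hy Hmeet]].
  pose proof (Hfar y (proj1 (Hpart y q Hmeet y) (on_line_self V y))). lra.
Qed.

Theorem mainTheorem2 (V : vec3 -> vec3) (DV : vec3 -> vec3 -> vec3)
  (hV : line_fibration V DV) :
  (forall p0 : vec3, rank2 (DV p0) ->
     forall q : vec3, ~ same_line V q p0 -> ~ parallel_dirs V q p0) /\
  ((forall p : vec3, rank2 (DV p)) ->
     forall p q : vec3, ~ same_line V p q -> ~ parallel_dirs V p q).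
Proof.
  split.
  - intros p0 Hrank q. exact (distinct_line_not_parallel V DV p0 q hV Hrank).
  - intros Hrank p q. exact (distinct_line_not_parallel V DV q p hV (Hrank q)).
Qed.
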